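(* Let $\alpha = 1-\frac{1}{W_{-1}(-2/e^3)+1}\approx 1.3871$ (equivalently, $1-1/\alpha$ is the solution $x$ of $3+\ln(1/2)=\ln(x)+1/x$ used to define it). For $\epsilon>0$, let $\mathcal{S}_\epsilon=\{\ell = 1/2+i\epsilon : i\in\mathbb{N}_{>0},\ \ell\le 1/\alpha\}$, let $B\ge 1/\epsilon$ be an integer and $c>0$. Consider the linear program $(\mathrm{LP}_\epsilon)$ in variables $\alpha_\epsilon$, $N_0$ and $N_x$ ($x\in\mathcal{S}_\epsilon$): minimize $\alpha_\epsilon$ subject to $N_0+\sum_{x\in\mathcal{S}_\epsilon}(1-x)N_x\ge B-1/B^c$; $N_0+\sum_{x\in\mathcal{S}_\epsilon}N_x\le \alpha_\epsilon\cdot B$; $N_0+\sum_{x\in\mathcal{S}_\epsilon,\,x\le t-\epsilon}N_x+\lfloor \frac{B}{1-t}\rfloor\le \alpha_\epsilon\cdot\lceil\frac{B}{1-t}\rceil$ for all $t\in\mathcal{S}_\epsilon$; $N_x\ge 0$. Then the optimal value $\alpha^\star_\epsilon$ of $(\mathrm{LP}_\epsilon)$ satisfies $\alpha^\star_\epsilon\in[\alpha-O(\epsilon),\alpha+O(\epsilon)]$. *)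

From HB Require Import structures.
From mathcomp Require Import all_boot all_order all_algebra.
From mathcomp Require Import reals sequences exp.
Set Implicit Arguments. Unset Strict Implicit. Unset Printing Implicit Defensive.
Import Order.TTheory GRing.Theory Num.Theory.
Local Open Scope ring_scope.

Definition xpt (R : realType) (eps : R) (i : nat) : R := 1/2 + i%:R * eps.

Definition inS (R : realType) (al eps : R) (i : nat) : bool :=
  (0 < i)%N && (xpt eps i <= al^-1).

(* Feasibility of (LP_eps) at the point (a = alpha_eps, N0, N_x = N i for x = xpt eps i).
   Since every i with inS has i*eps < 1 <= B*eps, i.e. i < B, summing over
   i < B with the filter inS is summing over all of S_eps. *)
Definition LP_feasible (R : realType) (al eps : R) (B : nat) (c : R)
    (a N0 : R) (N : nat -> R) : Prop :=
  [/\ B%:R - (B%:R `^ c)^-1 <= N0 + \sum_(i < B | inS al eps i) (1 - xpt eps i) * N i,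
      N0 + \sum_(i < B | inS al eps i) N i <= a * B%:R,
      forall j : nat, inS al eps j ->
        N0 + \sum_(i < B | inS al eps i && (xpt eps i <= xpt eps j - eps)) N i
           + (Num.floor (B%:R / (1 - xpt eps j)))%:~R
        <= a * (Num.ceil (B%:R / (1 - xpt eps j)))%:~R,
      0 <= N0 &
      forall i : nat, inS al eps i -> 0 <= N i].

Definition LP_opt (R : realType) (al eps : R) (B : nat) (c : R) (v : R) : Prop :=
  (exists (N0 : R) (N : nat -> R), LP_feasible al eps B c v N0 N) /\
  (forall (a N0 : R) (N : nat -> R), LP_feasible al eps B c a N0 N -> v <= a).

From mathcomp Require Import all_boot all_order all_algebra.
From mathcomp Require Import reals sequences exp.
From mathcomp Require Import classical_sets ring lra.
Import Order.TTheory GRing.Theory Num.Theory.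
Local Open Scope ring_scope.

Set Implicit Arguments. Unset Strict Implicit. Unset Printing Implicit Defensive.

(* Write n_0 = N_0, n_i = N_i and P_k = n_0 + ... + n_k.  Constraints (2) and
   (3) bound each prefix sum P_k by a B and by the caps
   a ceil(B / (1 - x_j)) - floor(B / (1 - x_j)) for j > k, and summation by
   parts writes the objective as a nonnegative combination of the P_k, the
   weights 1 - x_k being decreasing.  So a is a feasible value iff raising
   every P_k to its least cap satisfies (1), and the optimum is the least such
   a; it is attained because the caps are Lipschitz in a.  The caps are
   (a - 1) B / (1 - x) + O(1), so the objective is, up to O(eps B),
   B ((a - 1) (1 + int_{1/2}^{1-y} dx / (1 - x)) + a y) = B ((a - 1) (1/y - 2) + a y),
   where y = 1 - 1/alpha satisfies ln y = 3 - ln 2 - 1/y; and this is exactly B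
   at a = alpha. *)

Lemma sum_by_parts (R : comPzRingType) (w n : nat -> R) K :
  \sum_(0 <= k < K.+1) w k * n k =
  \sum_(0 <= k < K) (\sum_(0 <= i < k.+1) n i) * (w k - w k.+1)
  + (\sum_(0 <= i < K.+1) n i) * w K.
Proof.
elim: K => [|K IH]; first by rewrite !big_nat1 big_geq // add0r mulrC.
rewrite big_nat_recr //= IH [in RHS]big_nat_recr //= [in X in _ = _ + X]big_nat_recr //=.
ring.
Qed.

Lemma sum_ord_range (V : nmodType) (P : pred nat) (F : nat -> V) B lo hi :
  (hi <= B)%N -> (forall i, P i = (lo <= i < hi)%N) ->
  \sum_(i < B | P i) F i = \sum_(lo <= i < hi) F i.
Proof.
move=> hiB PE; rewrite (eq_bigl (fun i : 'I_B => (lo <= i < hi)%N)) => [|i]; last exact: PE.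
rewrite -(big_mkord (fun i => (lo <= i < hi)%N)).
by rewrite [RHS](big_nat_widenl _ 0) // [RHS](big_nat_widen _ _ B).
Qed.

Lemma ceil_le_addr1 (R : realType) (x : R) : (Num.ceil x)%:~R <= x + 1.
Proof. by have := ceilB1_lt x; rewrite rmorphB /=; lra. Qed.

Lemma floor_ge_subr1 (R : realType) (x : R) : x - 1 <= (Num.floor x)%:~R.
Proof. by have := floorD1_gt x; rewrite rmorphD /=; lra. Qed.

Lemma ln_le_subr1 (R : realType) (x : R) : 0 < x -> ln x <= x - 1.
Proof.
by move=> x_gt0; have := @le_ln1Dx R (x - 1); rewrite addrCA subrr addr0; apply; lra.
Qed.

Lemma lnB_le (R : realType) (u v : R) : 0 < u -> 0 < v -> ln u - ln v <= u / v - 1.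
Proof. by move=> u_gt0 v_gt0; rewrite -ln_div ?posrE // ln_le_subr1 // divr_gt0. Qed.

Section ReducedLP.
Variables (R : realType) (eps : R).
Hypothesis eps_gt0 : 0 < eps.

Lemma xptS i : xpt eps i.+1 = xpt eps i + eps.
Proof. by rewrite /xpt -natr1; ring. Qed.

Lemma ler_xpt i j : (i <= j)%N -> xpt eps i <= xpt eps j.
Proof. by move=> le_ij; rewrite /xpt lerD2l ler_wpM2r ?ler_nat // ltW. Qed.

Lemma xpt_le_subr_eps i j : (xpt eps i <= xpt eps j - eps) = (i < j)%N.
Proof. by rewrite lerBrDr -xptS /xpt lerD2l ler_pM2r // ler_nat. Qed.

Definition weight (k : nat) : R := if k == 0%N then 1 else 1 - xpt eps k.

Lemma weight_gt0E k : (0 < k)%N -> weight k = 1 - xpt eps k.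
Proof. by rewrite /weight; case: k. Qed.

Lemma weightB k : weight k - weight k.+1 = if k == 0%N then xpt eps 1 else eps.
Proof.
rewrite /weight /=; case: eqP => [->|_] /=; first ring.
by rewrite xptS; ring.
Qed.

Lemma weightB_ge0 k : 0 <= weight k - weight k.+1.
Proof.
rewrite weightB; case: eqP => _; last exact: ltW.
have := ler_xpt (leq0n 1); rewrite /xpt; lra.
Qed.

Lemma weight_ge0 k : xpt eps k < 1 -> 0 <= weight k.
Proof. by rewrite /weight; case: eqP => // _; rewrite subr_ge0 => /ltW. Qed.

Lemma telescope_weight K : \sum_(0 <= k < K) (weight k - weight k.+1) = 1 - weight K.
Proof.
by rewrite (telescope_sumr_eq (fun k => - weight k)) // => [|k _]; rewrite /weight /=; ring.
Qed.

Variables (B K : nat).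

Definition Bdiv (j : nat) : R := B%:R / (1 - xpt eps j).

(* Constraint (3) at t = x_j reads N_0 + N_1 + ... + N_{j-1} <= cap a j. *)
Definition cap (a : R) (j : nat) : R :=
  a * (Num.ceil (Bdiv j))%:~R - (Num.floor (Bdiv j))%:~R.

Definition prefix_cap (a : R) (k : nat) : R :=
  \big[Num.min/a * B%:R]_(k.+1 <= j < K.+1) cap a j.

Lemma prefix_cap_le_cap a k j : (k < j <= K)%N -> prefix_cap a k <= cap a j.
Proof. by move=> kjK; rewrite /prefix_cap ge_bigmin_seq // mem_index_iota ltnS. Qed.

Lemma prefix_cap_le a k : prefix_cap a k <= a * B%:R.
Proof. exact: bigmin_le_id. Qed.

Lemma prefix_capK a : prefix_cap a K = a * B%:R.
Proof. by rewrite /prefix_cap big_geq. Qed.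

Lemma le_prefix_cap a k p : p <= a * B%:R ->
  (forall j, (k < j <= K)%N -> p <= cap a j) -> p <= prefix_cap a k.
Proof.
move=> p_le p_cap; rewrite /prefix_cap big_seq; apply: le_bigmin => // j.
by rewrite mem_index_iota ltnS => /p_cap.
Qed.

Lemma prefix_cap_mono a k : prefix_cap a k <= prefix_cap a k.+1.
Proof.
apply: le_prefix_cap => [|j /andP[ltkj lejK]]; first exact: prefix_cap_le.
by apply: prefix_cap_le_cap; rewrite lejK andbT (ltn_trans _ ltkj).
Qed.

Definition best_obj (a : R) : R :=
  \sum_(0 <= k < K) prefix_cap a k * (weight k - weight k.+1) + a * B%:R * weight K.

Definition admissible (c a : R) : Prop :=
  0 <= prefix_cap a 0 /\ B%:R - (B%:R `^ c)^-1 <= best_obj a.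

Definition lp_vars (N0 : R) (N : nat -> R) (k : nat) : R := if k == 0%N then N0 else N k.

Lemma ler_Bdiv i j : (i <= j)%N -> xpt eps j < 1 -> Bdiv i <= Bdiv j.
Proof.
move=> leij xj_lt1; have xi_lt1 := le_lt_trans (ler_xpt leij) xj_lt1.
by rewrite ler_wpM2l // lef_pV2 ?posrE ?subr_gt0 // lerD2l lerN2 ler_xpt.
Qed.

Hypothesis xK_lt1 : xpt eps K < 1.

Lemma B_le_BdivK : B%:R <= Bdiv K.
Proof.
have xK_ge0 : 0 <= xpt eps K by apply: le_trans (ler_xpt (leq0n K)); rewrite /xpt; lra.
by rewrite /Bdiv ler_pdivlMr ?subr_gt0 //; apply: ler_piMr; rewrite ?gerBl.
Qed.

Lemma prefix_cap_lipschitz a a' k : a <= a' ->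
  prefix_cap a' k - (Bdiv K + 1) * (a' - a) <= prefix_cap a k.
Proof.
move=> le_aa'; have B_le := B_le_BdivK; apply: le_prefix_cap.
  by have := prefix_cap_le a' k; nra.
move=> j kjK; have := prefix_cap_le_cap a' kjK; case/andP: kjK => _ lejK.
have := ler_Bdiv lejK xK_lt1; have := ceil_le_addr1 (Bdiv j); rewrite /cap; nra.
Qed.

Lemma best_obj_lipschitz a a' : a <= a' ->
  best_obj a' - (Bdiv K + 1) * (a' - a) <= best_obj a.
Proof.
move=> le_aa'; set S := Bdiv K + 1; have B_le : B%:R <= S by have := B_le_BdivK; rewrite /S; lra.
have -> : best_obj a' - S * (a' - a) =
    \sum_(0 <= k < K) (prefix_cap a' k - S * (a' - a)) * (weight k - weight k.+1)
    + (a' * B%:R - S * (a' - a)) * weight K.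
  under [in RHS]eq_bigr do rewrite mulrBl.
  by rewrite sumrB -mulr_sumr telescope_weight /best_obj; ring.
rewrite /best_obj lerD //.
  apply: ler_sum_nat => k _; apply: ler_wpM2r; first exact: weightB_ge0.
  exact: prefix_cap_lipschitz.
by apply: ler_wpM2r; [exact: weight_ge0 | nra].
Qed.

Variable al : R.
Hypotheses (S_range : forall i, inS al eps i = (0 < i <= K)%N) (K_lt_B : (K < B)%N).

Lemma sum_S (F : nat -> R) : \sum_(i < B | inS al eps i) F i = \sum_(1 <= i < K.+1) F i.
Proof. by apply: sum_ord_range => // i; rewrite S_range ltnS. Qed.

Lemma sum_S_before (F : nat -> R) j : (j <= K)%N ->
  \sum_(i < B | inS al eps i && (xpt eps i <= xpt eps j - eps)) F i = \sum_(1 <= i < j) F i.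
Proof.
move=> lejK.
apply: (@sum_ord_range _ (fun i => inS al eps i && (xpt eps i <= xpt eps j - eps))) => [|i].
  exact: ltnW (leq_ltn_trans lejK K_lt_B).
rewrite S_range xpt_le_subr_eps; case: (ltnP i j) => [ltij|]; rewrite ?andbF ?andbT //.
by rewrite (leq_trans (ltnW ltij) lejK) andbT.
Qed.

Lemma LP_feasibleE c a N0 N : let n := lp_vars N0 N in
  LP_feasible al eps B c a N0 N <->
  [/\ B%:R - (B%:R `^ c)^-1 <= \sum_(0 <= k < K.+1) weight k * n k,
      \sum_(0 <= i < K.+1) n i <= a * B%:R,
      forall j, (0 < j <= K)%N -> \sum_(0 <= i < j) n i <= cap a j
    & forall k, (k <= K)%N -> 0 <= n k].
Proof.
move=> n.
have sum_n m : \sum_(0 <= i < m.+1) n i = N0 + \sum_(1 <= i < m.+1) N i.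
  by rewrite big_nat_recl // big_add1.
have obj : \sum_(0 <= k < K.+1) weight k * n k =
    N0 + \sum_(i < B | inS al eps i) (1 - xpt eps i) * N i.
  by rewrite big_nat_recl // (sum_S (fun i => (1 - xpt eps i) * N i)) big_add1 mul1r.
rewrite obj sum_n -sum_S /LP_feasible /cap; split.
- move=> [obj_ge tot_le cap_ge N0_ge0 N_ge0]; split=> // [j /andP[j_gt0 lejK]|[|k] lekK] //.
  + rewrite -(prednK j_gt0) sum_n prednK // -sum_S_before // lerBrDr.
    by apply: cap_ge; rewrite S_range j_gt0.
  + by apply: N_ge0; rewrite S_range.
- move=> [obj_ge tot_le cap_ge n_ge0]; split=> // [j||i].
  + rewrite S_range => /andP[j_gt0 lejK]; have := cap_ge j; rewrite j_gt0 lejK.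
    by rewrite -(prednK j_gt0) sum_n prednK // sum_S_before // lerBrDr; apply.
  + exact: (n_ge0 0%N).
  + by rewrite S_range => /andP[i_gt0 leiK]; have := n_ge0 i leiK; rewrite /n /lp_vars gtn_eqF.
Qed.

Lemma LP_feasible_admissible c a N0 N : LP_feasible al eps B c a N0 N -> admissible c a.
Proof.
move=> /LP_feasibleE[obj_ge tot_le cap_ge n_ge0].
set n := lp_vars N0 N in obj_ge tot_le cap_ge n_ge0.
have sum_mono m p : (m <= p <= K.+1)%N -> \sum_(0 <= i < m) n i <= \sum_(0 <= i < p) n i.
  move=> /andP[lemp lepK]; rewrite (big_cat_nat (leq0n m) lemp) /= lerDl big_nat_cond.
  by apply: sumr_ge0 => i /andP[/andP[_ ltip] _]; apply: n_ge0; rewrite -ltnS (leq_trans ltip).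
have le_cap k : (k <= K)%N -> \sum_(0 <= i < k.+1) n i <= prefix_cap a k.
  move=> lekK; apply: le_prefix_cap => [|j /andP[ltkj lejK]].
    by apply: (le_trans _ tot_le); apply: sum_mono; rewrite ltnS lekK leqnn.
  have jK : (0 < j <= K)%N by rewrite lejK (leq_ltn_trans _ ltkj).
  by apply: le_trans (cap_ge j jK); apply: sum_mono; rewrite ltkj (leq_trans lejK).
split; first by apply: le_trans (le_cap 0%N _); rewrite ?big_nat1 ?(n_ge0 0%N).
apply: le_trans obj_ge _; rewrite sum_by_parts /best_obj lerD //.
  apply: ler_sum_nat => k /andP[_ ltkK]; apply: ler_wpM2r; first exact: weightB_ge0.
  exact: le_cap (ltnW ltkK).
by apply: ler_wpM2r; first exact: weight_ge0.
Qed.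

Lemma admissible_LP_feasible c a :
  admissible c a -> exists N0 N, LP_feasible al eps B c a N0 N.
Proof.
move=> [cap0_ge0 obj_le]; pose M := prefix_cap a.
exists (M 0%N), (fun i => M i - M i.-1); apply/LP_feasibleE.
set n := lp_vars _ _.
have sum_n k : \sum_(0 <= i < k.+1) n i = M k.
  elim: k => [|k IH]; first by rewrite big_nat1.
  by rewrite big_nat_recr //= IH addrC subrK.
split.
- by rewrite sum_by_parts sum_n; under eq_big_nat => k _ do rewrite sum_n; rewrite /M prefix_capK.
- by rewrite sum_n /M prefix_capK.
- by move=> [|j] // /andP[_ ltjK]; rewrite sum_n prefix_cap_le_cap // ltjK andbT.
- by move=> [|k] _ //; rewrite /n /lp_vars /= subr_ge0 prefix_cap_mono.
Qed.

Lemma LP_opt_inf c : (exists a, admissible c a) ->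
  exists v, LP_opt al eps B c v /\ forall a, admissible c a -> v <= a.
Proof.
move=> [a0 adm_a0]; pose E : set R := admissible c.
have B_gt0 : (0 : R) < B%:R by rewrite ltr0n (leq_ltn_trans _ K_lt_B).
have E_ge0 a : E a -> 0 <= a.
  by move=> [cap0_ge0 _]; have := le_trans cap0_ge0 (prefix_cap_le a 0); rewrite pmulr_lge0.
have E_inf : has_inf E by split; [exists a0 | exists 0 => a /E_ge0].
pose v := inf E; have v_le a : E a -> v <= a by apply: ge_inf; case: E_inf.
have S_gt0 : 0 < Bdiv K + 1 by have := B_le_BdivK; lra.
have near_v e : 0 < e -> exists2 a, E a & v <= a /\ (Bdiv K + 1) * (a - v) <= e.
  move=> e_gt0; have [a Ea lt_a] := inf_adherent (divr_gt0 e_gt0 S_gt0) E_inf.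
  exists a => //; split; first exact: v_le.
  by rewrite -ler_pdivlMl // mulrC; rewrite -/v in lt_a; lra.
have Ev : E v.
  split; apply/ler_addgt0Pr => e /near_v[a [cap0_ge0 obj_le] [le_va Se]].
  - by have := prefix_cap_lipschitz 0 le_va; lra.
  - by have := best_obj_lipschitz le_va; lra.
exists v; split=> //; split; first exact: admissible_LP_feasible.
by move=> a N0 N /LP_feasible_admissible /v_le.
Qed.

End ReducedLP.

Section BestObjBounds.
Variables (R : realType) (eps : R) (B K : nat).
Hypothesis eps_gt0 : 0 < eps.

(* The first term is x_1 / (1 - x_1); the others are right Riemann sums of
   the integral of 1 / (1 - x), i.e. of - ln (1 - x). *)
Definition inv_sum (n : nat) : R :=
  \sum_(0 <= k < n) (weight eps k - weight eps k.+1) / (1 - xpt eps k.+1).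

Let ln_start : R := xpt eps 1 / (1 - xpt eps 1) + ln (1 - xpt eps 1).

Lemma inv_sum_ge_ln k : xpt eps k.+1 < 1 -> ln_start - ln (1 - xpt eps k.+1) <= inv_sum k.+1.
Proof.
rewrite /ln_start; elim: k => [|k IH] xk_lt1; first by rewrite /inv_sum big_nat1 weightB /=; lra.
have xk_lt1' : xpt eps k.+1 < 1 := le_lt_trans (ler_xpt eps_gt0 (leqnSn _)) xk_lt1.
rewrite /inv_sum big_nat_recr //= -/(inv_sum k.+1) weightB /=.
have := lnB_le (_ : 0 < 1 - xpt eps k.+1) (_ : 0 < 1 - xpt eps k.+2).
rewrite !subr_gt0 xk_lt1 xk_lt1' (xptS eps k.+1) => /(_ isT isT).
have := IH xk_lt1'; rewrite (xptS eps k.+1) in xk_lt1 *.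
have -> : (1 - xpt eps k.+1) / (1 - (xpt eps k.+1 + eps)) - 1 = eps / (1 - (xpt eps k.+1 + eps)).
  by field; lra.
lra.
Qed.

Lemma inv_sum_le_ln k : xpt eps k.+2 < 1 -> inv_sum k.+1 <= ln_start - ln (1 - xpt eps k.+2).
Proof.
rewrite /ln_start; elim: k => [|k IH] xk_lt1.
  have x1_lt1 : xpt eps 1 < 1 := le_lt_trans (ler_xpt eps_gt0 (leqnSn _)) xk_lt1.
  have : ln (1 - xpt eps 2) <= ln (1 - xpt eps 1).
    by rewrite ler_ln ?posrE ?subr_gt0 // lerD2l lerN2 ler_xpt.
  by rewrite /inv_sum big_nat1 weightB /=; lra.
have xk_lt1' : xpt eps k.+2 < 1 := le_lt_trans (ler_xpt eps_gt0 (leqnSn _)) xk_lt1.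
rewrite /inv_sum big_nat_recr //= -/(inv_sum k.+1) weightB /=.
have := lnB_le (_ : 0 < 1 - xpt eps k.+3) (_ : 0 < 1 - xpt eps k.+2).
rewrite !subr_gt0 xk_lt1 xk_lt1' (xptS eps k.+2) => /(_ isT isT).
have := IH xk_lt1'; rewrite (xptS eps k.+2) in xk_lt1 *.
have -> : (1 - (xpt eps k.+2 + eps)) / (1 - xpt eps k.+2) - 1 = - (eps / (1 - xpt eps k.+2)).
  by field; lra.
lra.
Qed.

Lemma best_obj_le_inv_sum a : 0 <= a ->
  best_obj eps B K a <= (a - 1) * B%:R * inv_sum K + (a + 1) * (1 - weight eps K)
                        + a * B%:R * weight eps K.
Proof.
move=> a_ge0; rewrite /best_obj lerD2r -telescope_weight mulr_sumr /inv_sum mulr_sumr -big_split /=.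
apply: ler_sum_nat => k /andP[_ ltkK].
have -> : (a - 1) * B%:R * ((weight eps k - weight eps k.+1) / (1 - xpt eps k.+1)) =
  (a - 1) * Bdiv eps B k.+1 * (weight eps k - weight eps k.+1) by rewrite /Bdiv; ring.
rewrite -mulrDl; apply: ler_wpM2r; first exact: weightB_ge0.
have kK : (k < k.+1 <= K)%N by rewrite ltnSn.
apply: le_trans (prefix_cap_le_cap eps B a kK) _.
have := ceil_le_addr1 (Bdiv eps B k.+1); have := floor_ge_subr1 (Bdiv eps B k.+1).
by rewrite /cap; nra.
Qed.

Lemma best_obj_ge_inv_sum a b :
  (forall k, (k < K)%N -> b * Bdiv eps B k.+1 <= prefix_cap eps B K a k) ->
  b * B%:R * inv_sum K + a * B%:R * weight eps K <= best_obj eps B K a.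
Proof.
move=> le_cap; rewrite /best_obj lerD2r /inv_sum mulr_sumr.
apply: ler_sum_nat => k /andP[_ ltkK].
have -> : b * B%:R * ((weight eps k - weight eps k.+1) / (1 - xpt eps k.+1)) =
  b * Bdiv eps B k.+1 * (weight eps k - weight eps k.+1) by rewrite /Bdiv; ring.
by apply: ler_wpM2r; [exact: weightB_ge0 | exact: le_cap].
Qed.

Lemma inv_sum_ge0 n : xpt eps n < 1 -> 0 <= inv_sum n.
Proof.
move=> xn_lt1; rewrite /inv_sum big_nat_cond; apply: sumr_ge0 => k /andP[/andP[_ ltkn] _].
rewrite divr_ge0 ?weightB_ge0 // subr_ge0 ltW // (le_lt_trans _ xn_lt1) //.
exact: ler_xpt.
Qed.

End BestObjBounds.

Lemma subr_inv_powR_bounds (R : realType) (x c : R) : 1 <= x -> 0 <= c ->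
  x - 1 <= x - (x `^ c)^-1 <= x.
Proof.
move=> x_ge1 c_ge0; have := ler_powR x_ge1 c_ge0; rewrite powRr0 => xc_ge1.
have : 0 <= (x `^ c)^-1 <= 1 by rewrite invr_ge0 powR_ge0 invf_le1 // (lt_le_trans ltr01).
by case/andP=> ? ?; apply/andP; split; lra.
Qed.

Section AlphaBounds.
Variables (R : realType) (al y eps : R) (B K : nat).

(* Its root x < 1/2 is y = 1 - 1/alpha. *)
Definition alpha_root (x : R) := [/\ 0 < x, x < 1/2 & ln x = 3 - ln 2 - x^-1].

Lemma alpha_root_inv_gt2 : alpha_root y -> 2 < y^-1.
Proof. by move=> [y_gt0 y_lt _]; have := mulfV (lt0r_neq0 y_gt0); nra. Qed.

Lemma alpha_bounds : alpha_root y -> al * (1 - y) = 1 -> 1 < al < 2.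
Proof. by move=> [y_gt0 y_lt _] al_y; apply/andP; split; nra. Qed.

Lemma alpha_mul_inv : y != 0 -> al * (1 - y) = 1 -> (al - 1) * y^-1 = al.
Proof. by move=> y_neq0 al_y; apply: (mulIf y_neq0); rewrite -mulrA mulVf // mulr1; lra. Qed.

Lemma alpha_identity : y != 0 -> al * (1 - y) = 1 -> (al - 1) * (y^-1 - 2) + al * y = 1.
Proof. by move=> y_neq0 al_y; rewrite mulrBr alpha_mul_inv //; lra. Qed.

Hypotheses (y_root : alpha_root y) (eps_small : 0 < eps <= (1/2 - y) * y / 4).
Hypothesis K_last : [/\ (0 < K)%N, xpt eps K <= 1 - y & 1 - y < xpt eps K.+1].

Lemma eps_bounds : [/\ eps <= 1/64, eps <= y / 2 & eps <= (1/2 - y) / 2].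
Proof.
have [y_gt0 y_lt _] := y_root; have /andP[eps_gt0 eps_le] := eps_small.
by split; [have := sqr_ge0 (y - 1/4) | |]; nra.
Qed.

(* Up to O(eps), inv_sum K is 1 - ln 2 - ln y, i.e. y^-1 - 2 by the equation
   defining y. *)
Lemma inv_sum_le_alpha : inv_sum eps K <= y^-1 - 2 + 8 * eps + 2 * eps * y^-1.
Proof.
have [y_gt0 y_lt ln_y] := y_root; have /andP[eps_gt0 eps_le] := eps_small.
have [K_gt0 xK_le xK1_gt] := K_last; have t_gt2 := alpha_root_inv_gt2 y_root.
have yt : y * y^-1 = 1 by rewrite mulfV ?lt0r_neq0.
set t := y^-1 in t_gt2 yt ln_y *; set z := 1 - xpt eps K.+1.
have [z_lt_y y_le_z] : z < y /\ y - eps <= z by rewrite /z xptS in xK1_gt *; split; lra.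
have [eps_le64 eps_le_y _] := eps_bounds; have z_gt0 : 0 < z by lra.
have xK1_lt1 : xpt eps K.+1 < 1 by rewrite -subr_gt0.
have x1E : xpt eps 1 = 1/2 + eps by rewrite /xpt; ring.
have := @inv_sum_le_ln R eps eps_gt0 K.-1; rewrite prednK // -/z x1E => /(_ xK1_lt1).
have : ln (1 - (1/2 + eps)) <= - ln 2 by rewrite -lnV ?posrE // ler_ln ?posrE; lra.
have := lnB_le y_gt0 z_gt0; have : (1/2 + eps) / (1 - (1/2 + eps)) <= 1 + 8 * eps.
  by rewrite ler_pdivrMr; nra.
have : y / z <= 1 + 2 * eps * t.
  rewrite ler_pdivrMr //; have : eps * t * y = eps by rewrite -mulrA [t * y]mulrC yt mulr1.
  have : 0 <= eps * t by apply: mulr_ge0; lra.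
  nra.
lra.
Qed.

Lemma inv_sum_ge_alpha : y^-1 - 2 - 4 * eps - eps * y^-1 <= inv_sum eps K.
Proof.
have [y_gt0 y_lt ln_y] := y_root; have /andP[eps_gt0 eps_le] := eps_small.
have [K_gt0 xK_le xK1_gt] := K_last; have t_gt2 := alpha_root_inv_gt2 y_root.
have yt : y * y^-1 = 1 by rewrite mulfV ?lt0r_neq0.
set t := y^-1 in t_gt2 yt ln_y *; set u := 1 - xpt eps K.
have [y_le_u u_lt] : y <= u /\ u < y + eps by rewrite /u xptS in xK1_gt *; split; lra.
have [eps_le64 _ _] := eps_bounds; have xK_lt1 : xpt eps K < 1 by lra.
have x1E : xpt eps 1 = 1/2 + eps by rewrite /xpt; ring.
have := @inv_sum_ge_ln R eps eps_gt0 K.-1; rewrite prednK // -/u x1E => /(_ xK_lt1).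
have : 1 <= (1/2 + eps) / (1 - (1/2 + eps)) by rewrite ler_pdivlMr; lra.
have ln_half : ln (1/2 : R) = - ln 2 by rewrite mul1r lnV ?posrE.
have := @lnB_le R (1/2) (1 - (1/2 + eps)) ltac:(lra) ltac:(lra); rewrite ln_half.
have : 1/2 / (1 - (1/2 + eps)) <= 1 + 4 * eps by rewrite ler_pdivrMr; nra.
have := @lnB_le R u y ltac:(lra) y_gt0.
have : u / y <= 1 + eps * t.
  by rewrite ler_pdivrMr // mulrDl mul1r -mulrA [t * y]mulrC yt mulr1; lra.
lra.
Qed.

Hypotheses (al_y : al * (1 - y) = 1) (B_eps : 1 <= B%:R * eps).

Lemma B_ge64 : (64 : R) <= B%:R.
Proof.
have [eps_le64 _ _] := eps_bounds; have /andP[eps_gt0 _] := eps_small.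
by have := B_eps; nra.
Qed.

Lemma admissible_ge1 c a : 0 < c -> admissible eps B K c a -> 1 <= a.
Proof.
have [y_gt0 y_lt _] := y_root; have /andP[eps_gt0 eps_le] := eps_small.
have [K_gt0 xK_le xK1_gt] := K_last; have [_ _ eps_le'] := eps_bounds; have B_ge := B_ge64.
move=> c_gt0 [cap0_ge0 obj_ge]; rewrite leNgt; apply/negP => a_lt1.
have a_ge0 : 0 <= a.
  by have := le_trans cap0_ge0 (prefix_cap_le eps B K a 0); rewrite pmulr_lge0 //; lra.
have /andP[T_ge _] := @subr_inv_powR_bounds R B%:R c ltac:(lra) (ltW c_gt0).
have xK_lt1 : xpt eps K < 1 by lra.
have := best_obj_le_inv_sum B K eps_gt0 a_ge0; have := inv_sum_ge0 eps_gt0 xK_lt1.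
rewrite weight_gt0E // xptS in xK1_gt * => Q_ge0 obj_le.
have : 0 <= (1 - a) * B%:R * inv_sum eps K by rewrite !mulr_ge0 //; lra.
have : 0 <= (1 - a) * B%:R * (1 - xpt eps K) by rewrite !mulr_ge0 //; lra.
have : 0 <= (a + 1) * (1 - xpt eps K) by rewrite mulr_ge0 //; lra.
have : 0 <= B%:R * (y + eps - (1 - xpt eps K)) by rewrite mulr_ge0 //; lra.
have : 0 <= B%:R * (1/2 - y - eps) by rewrite mulr_ge0 //; lra.
lra.
Qed.

Lemma admissible_gap c a : 0 < c -> admissible eps B K c a -> a < al ->
  (al - a) * (y^-1 - 2 + y) <= eps * (14 + 2 * y^-1).
Proof.
have [y_gt0 y_lt _] := y_root; have /andP[eps_gt0 eps_le] := eps_small.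
have [K_gt0 xK_le xK1_gt] := K_last; have [_ _ eps_le'] := eps_bounds; have B_eps' := B_eps.
have t_gt2 := alpha_root_inv_gt2 y_root; have /andP[al_gt1 al_lt2] := alpha_bounds y_root al_y.
have Q_le := inv_sum_le_alpha; have al_id := alpha_identity (lt0r_neq0 y_gt0) al_y.
move=> c_gt0 adm lt_a_al; have a_ge1 := admissible_ge1 c_gt0 adm; case: adm => _ obj_ge.
have B_ge := B_ge64; have B_gt0 : (0 : R) < B%:R by lra.
have /andP[T_ge _] := @subr_inv_powR_bounds R B%:R c ltac:(lra) (ltW c_gt0).
have := best_obj_le_inv_sum B K eps_gt0 (_ : 0 <= a); rewrite weight_gt0E // => /(_ ltac:(lra)).
rewrite xptS in xK1_gt; set t := y^-1 in t_gt2 Q_le al_id * => obj_le.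
have r1 : 0 <= (a - 1) * B%:R * (t - 2 + 8 * eps + 2 * eps * t - inv_sum eps K).
  by rewrite !mulr_ge0 //; lra.
have r2 : 0 <= a * B%:R * (y + eps - (1 - xpt eps K)) by rewrite !mulr_ge0 //; lra.
have r3 : 0 <= (a + 1) * (1 - xpt eps K) by rewrite mulr_ge0 //; lra.
have r4 : 0 <= (a + 1) * (B%:R * eps - 1) by rewrite mulr_ge0 //; lra.
have : B%:R * (1 - eps) <= B%:R * ((a - 1) * (t - 2) + (a - 1) * (8 * eps + 2 * eps * t)
                                   + (a + 1) * eps + a * y + a * eps) by lra.
rewrite ler_pM2l // => key.
have : 0 <= eps * (8 + 2 * t) * (2 - a) by rewrite !mulr_ge0 //; lra.
have : 0 <= eps * (2 - a) by rewrite mulr_ge0 //; lra.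
lra.
Qed.

Lemma admissible_ge c a : 0 < c -> admissible eps B K c a -> al - 36 * eps <= a.
Proof.
have [y_gt0 y_lt _] := y_root; have /andP[eps_gt0 _] := eps_small.
have t_gt2 := alpha_root_inv_gt2 y_root; have yt : y * y^-1 = 1 by rewrite mulfV ?lt0r_neq0.
move=> c_gt0 adm; case: (leP al a) => [le_al_a | lt_a_al]; first lra.
have := admissible_gap c_gt0 adm lt_a_al; set t := y^-1 in t_gt2 yt * => gap.
have : 0 <= 3/4 * t - 2 + y.
  have : 0 <= y * (3/4 * t - 2 + y).
    have -> : y * (3/4 * t - 2 + y) = 3/4 * (y * t) - 2 * y + y * y by ring.
    rewrite yt; have : 0 <= (1/2 - y) * (3/2 - y) by rewrite mulr_ge0 //; lra.
    lra.
  by rewrite pmulr_rge0.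
move=> t_quarter; have h1 : 0 <= (al - a) * (3/4 * t - 2 + y) by rewrite mulr_ge0 //; lra.
have h2 : 0 <= eps * (t - 2) by rewrite mulr_ge0 //; lra.
have : 0 <= t * (36 * eps - (al - a)) by lra.
by rewrite pmulr_rge0; lra.
Qed.

Lemma le_prefix_cap_alpha a k : al <= a -> (k < K)%N ->
  (al - 1) * Bdiv eps B k.+1 <= prefix_cap eps B K a k.
Proof.
have [y_gt0 _ _] := y_root; have /andP[eps_gt0 _] := eps_small.
have [_ xK_le _] := K_last; have /andP[al_gt1 _] := alpha_bounds y_root al_y.
move=> le_al_a ltkK; have xK_lt1 : xpt eps K < 1 by lra.
have z_bounds j : (j <= K)%N -> 0 <= Bdiv eps B j <= B%:R * y^-1.
  move=> lejK; have := ler_xpt eps_gt0 lejK => xj_le.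
  apply/andP; split; first by rewrite divr_ge0 // subr_ge0; lra.
  by rewrite ler_wpM2l // lef_pV2 ?posrE; lra.
apply: le_prefix_cap => [|j /andP[ltkj lejK]].
  have /andP[_ z_le] := z_bounds _ ltkK; have al1_ge0 : 0 <= al - 1 by lra.
  have := ler_wpM2l al1_ge0 z_le; rewrite [X in _ <= X]mulrCA alpha_mul_inv ?lt0r_neq0 //.
  have : 0 <= (a - al) * B%:R by rewrite mulr_ge0 // subr_ge0.
  lra.
have /andP[zj_ge0 _] := z_bounds _ lejK.
have := ler_Bdiv eps_gt0 B ltkj (le_lt_trans (ler_xpt eps_gt0 lejK) xK_lt1).
have := ceil_ge (Bdiv eps B j); have := floor_le (Bdiv eps B j); rewrite /cap.
set z := Bdiv eps B => floor_le ceil_ge z_mono.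
have : 0 <= a * ((Num.ceil (z j))%:~R - z j) by rewrite mulr_ge0 //; lra.
have : 0 <= (a - al) * z j by rewrite mulr_ge0 // subr_ge0.
have : 0 <= (al - 1) * (z j - z k.+1) by rewrite mulr_ge0 //; lra.
lra.
Qed.

Lemma admissible_alpha c : 0 < c -> admissible eps B K c (al + (4 + y^-1) * y^-1 * eps).
Proof.
have [y_gt0 y_lt _] := y_root; have /andP[eps_gt0 _] := eps_small.
have [K_gt0 xK_le xK1_gt] := K_last; have /andP[al_gt1 al_lt2] := alpha_bounds y_root al_y.
have al_id := alpha_identity (lt0r_neq0 y_gt0) al_y; have Q_ge := inv_sum_ge_alpha.
have t_gt2 := alpha_root_inv_gt2 y_root; have yt : y * y^-1 = 1 by rewrite mulfV ?lt0r_neq0.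
have B_ge := B_ge64; move=> c_gt0; set a := al + _.
have le_al_a : al <= a by rewrite lerDl !mulr_ge0 //; lra.
have pc_ge := le_prefix_cap_alpha le_al_a.
split.
  apply: (le_trans _ (pc_ge 0%N K_gt0)); rewrite mulr_ge0 //; first lra.
  by rewrite divr_ge0 // subr_ge0 (le_trans (ler_xpt eps_gt0 K_gt0)) //; lra.
have /andP[_ T_le] := @subr_inv_powR_bounds R B%:R c ltac:(lra) (ltW c_gt0).
apply: (le_trans T_le); apply: (le_trans _ (best_obj_ge_inv_sum eps_gt0 pc_ge)).
rewrite weight_gt0E //.
have a_y : a * y = al * y + (4 + y^-1) * eps by rewrite /a; field; rewrite lt0r_neq0.
have r1 : 0 <= (al - 1) * B%:R * (inv_sum eps K - (y^-1 - 2 - 4 * eps - eps * y^-1)).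
  by rewrite !mulr_ge0 //; lra.
have r2 : 0 <= a * B%:R * (1 - xpt eps K - y) by rewrite !mulr_ge0 //; lra.
have r3 : B%:R * (a * y) = B%:R * (al * y) + B%:R * eps * (4 + y^-1) by rewrite a_y; ring.
have r4 : 0 <= B%:R * eps * (2 - al) * (4 + y^-1) by rewrite !mulr_ge0 //; lra.
have r5 : B%:R * ((al - 1) * (y^-1 - 2) + al * y) = B%:R by rewrite al_id mulr1.
lra.
Qed.

End AlphaBounds.

Lemma lambertW_alpha_root (R : realType) (w al : R) :
  w <= -1 -> w * expR w = - 2 / expR 3 -> al = 1 - (w + 1)^-1 ->
  exists y, [/\ alpha_root y, al * (1 - y) = 1 & al^-1 = 1 - y].
Proof.
move=> w_le we alE; have e3_gt0 : 0 < expR 3 :> R := expR_gt0 3.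
have w_lt : w < -1.
  rewrite lt_neqAle w_le andbT; apply/negP => /eqP w_eq; move: we; rewrite w_eq => we.
  have : 1 + 2 <= expR 2 :> R := expR_ge1Dx 2.
  have -> : expR 2 = expR (-1) * expR 3 :> R by rewrite -expRD; congr expR; lra.
  have -> : expR (-1) = 2 / expR 3 :> R by lra.
  by rewrite mulfVK ?gt_eqF //; lra.
have w_lt0 : w < 0 by lra.
have ln_w : ln (- w) + w = ln 2 - 3.
  have : - w * expR w = 2 / expR 3 by rewrite mulNr we mulNr opprK.
  move/(congr1 (@ln R)); rewrite lnM ?posrE ?oppr_gt0 ?expR_gt0 // expRK.
  by rewrite ln_div ?posrE ?expR_gt0 // expRK.
have ln2_le1 : ln 2 <= 1 :> R.
  by rewrite -[leRHS](expRK 1) ler_ln ?posrE ?expR_gt0 //; have := expR_ge1Dx (1 : R); lra.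
have ln_w_gt0 : 0 < ln (- w) by rewrite ln_gt0 //; lra.
have w_neq0 : w != 0 by rewrite lt_eqF //; lra.
have w1_neq0 : w + 1 != 0 by rewrite lt_eqF //; lra.
exists (- w)^-1; split; [split | |].
- by rewrite invr_gt0; lra.
- by rewrite mul1r ltf_pV2 ?posrE; lra.
- by rewrite lnV ?posrE ?invrK; lra.
- by rewrite alE; field; rewrite w_neq0 w1_neq0.
- by rewrite alE; field; rewrite w_neq0 w1_neq0.
Qed.

Lemma inS_range (R : realType) (al eps y : R) (B : nat) :
  0 < eps -> 0 < y -> al^-1 = 1 - y -> eps <= 1/2 - y -> 1 <= B%:R * eps ->
  exists K, [/\ forall i, inS al eps i = (0 < i <= K)%N, (K < B)%N
              & [/\ (0 < K)%N, xpt eps K <= 1 - y & 1 - y < xpt eps K.+1]].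
Proof.
move=> eps_gt0 y_gt0 al_inv eps_le B_eps; pose P i := xpt eps i <= al^-1.
have P1 : P 1%N by rewrite /P /xpt al_inv; lra.
have P_lt i : P i -> (i < B)%N.
  by rewrite /P /xpt al_inv -(ltr_nat R) -(ltr_pM2r eps_gt0); lra.
have [K PK K_max] := ex_maxnP (ex_intro P 1%N P1) (fun i Pi => ltnW (P_lt i Pi)).
have K_gt0 : (0 < K)%N := K_max 1%N P1.
exists K; split.
- move=> i; rewrite /inS; case: (posnP i) => [->|i_gt0] //=; apply/idP/idP; first exact: K_max.
  by move=> leiK; apply: le_trans PK; exact: ler_xpt.
- exact: P_lt.
- split=> //; first by rewrite -al_inv.
  by rewrite -al_inv real_ltNge ?num_real //; apply/negP => /K_max; rewrite ltnn.
Qed.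

Unset Implicit Arguments.

Theorem lemma2p2 (R : realType) (w al : R)
    (hw : w <= -1) (hwe : w * expR w = - 2 / expR 3)
    (hal : al = 1 - (w + 1)^-1) :
  exists C : R, 0 < C /\ exists eps0 : R, 0 < eps0 /\
  forall eps : R, 0 < eps -> eps <= eps0 ->
  forall B : nat, eps^-1 <= B%:R ->
  forall c : R, 0 < c ->
  exists v : R, LP_opt al eps B c v /\ al - C * eps <= v /\ v <= al + C * eps.
Proof.
have [y [y_root al_y al_inv]] := lambertW_alpha_root hw hwe hal.
have [y_gt0 y_lt _] := y_root; have t_gt2 := alpha_root_inv_gt2 y_root.
exists (36 + (4 + y^-1) * y^-1); split.
  by apply: addr_gt0; [|apply: mulr_gt0]; lra.
exists ((1/2 - y) * y / 4); split.
  by apply: divr_gt0; [apply: mulr_gt0|]; lra.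
move=> eps eps_gt0 eps_le B B_ge c c_gt0.
have eps_small : 0 < eps <= (1/2 - y) * y / 4 by rewrite eps_gt0.
have B_eps : 1 <= B%:R * eps by rewrite -ler_pdivrMr // div1r.
have eps_le' : eps <= 1/2 - y by nra.
have [K [S_range K_lt_B K_last]] := inS_range eps_gt0 y_gt0 al_inv eps_le' B_eps.
have [_ xK_le _] := K_last; have xK_lt1 : xpt eps K < 1 by lra.
have up := admissible_alpha y_root eps_small K_last al_y B_eps c_gt0.
have [v [v_opt v_le]] := LP_opt_inf eps_gt0 xK_lt1 S_range K_lt_B (ex_intro _ _ up).
exists v; split=> //; have [[N0 [N v_feas]] _] := v_opt.
have := LP_feasible_admissible eps_gt0 xK_lt1 S_range K_lt_B v_feas.
move/(admissible_ge y_root eps_small K_last al_y B_eps c_gt0).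
have := v_le _ up; have : 0 <= (4 + y^-1) * y^-1 * eps by rewrite !mulr_ge0 //; lra.
lra.
Qed.
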